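(* Let $M,N$ be complete pointed metric spaces and $f\colon M\to N$ a Lipschitz map with $f(0_M)=0_N$. Let $(x_n,y_n)_n$ be a sequence in $M\times M$ with $x_n\neq y_n$ for all $n$, and put $$m_n=\frac{\delta(f(x_n))-\delta(f(y_n))}{d(x_n,y_n)}\in\mathcal F(N).$$ Assume that $(m_n)_n$ converges weakly to some $\gamma\in\mathcal F(N)$. Then: (1) if $d(x_n,y_n)\to0$, then $\gamma=0$; (2) if $d(x_n,y_n)\to+\infty$, then $\gamma=0$; (3) if there exists $\alpha>0$ with $d(x_n,y_n)\ge\alpha$ for all $n$, and $\gamma\neq0$, then the sequence $(d(x_n,y_n))_n$ is bounded and $(f(x_n),f(y_n))_n$ has an accumulation point in $N\times N$.
   Context: Scalars are $\mathbb K=\mathbb R$ or $\mathbb C$. For a pointed metric space $(M,d,0_M)$, $\mathrm{Lip}_0(M)$ denotes the Banach space of Lipschitz functions $g\colon M\to\mathbb K$ with $g(0_M)=0$ normed by the best Lipschitz constant; $\delta(x)\in\mathrm{Lip}_0(M)^*$ is evaluation at $x$; the Lipschitz-free space $\mathcal F(M)$ is the norm-closed linear span of $\{\delta(x):x\in M\}$ in $\mathrm{Lip}_0(M)^*$, with dual $\mathrm{Lip}_0(M)$ (weak convergence in $\mathcal F(N)$ is with respect to this duality). *)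

From Stdlib Require Import Reals List.
From Coquelicot Require Import Coquelicot.
Open Scope R_scope.

(* Scalars: K = C if cplx = true, K = R (embedded in C as Im = 0) otherwise. *)
Definition in_K (cplx : bool) (z : C) : Prop := cplx = true \/ Im z = 0.

Definition is_metric {M : Type} (d : M -> M -> R) : Prop :=
  (forall x y, d x y = 0 <-> x = y) /\
  (forall x y, d x y = d y x) /\
  (forall x y z, d x z <= d x y + d y z).

Definition complete_metric {M : Type} (d : M -> M -> R) : Prop :=
  forall u : nat -> M,
    (forall eps, 0 < eps -> exists N, forall m n, (N <= m)%nat -> (N <= n)%nat ->
        d (u m) (u n) < eps) ->
    exists l, is_lim_seq (fun n => d (u n) l) 0.

Definition lipschitz_map {M N : Type} (dM : M -> M -> R) (dN : N -> N -> R)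
  (f : M -> N) : Prop :=
  exists L, forall a b, dN (f a) (f b) <= L * dM a b.

Definition Lip0 (cplx : bool) {N : Type} (d : N -> N -> R) (z : N) (g : N -> C) : Prop :=
  (forall x, in_K cplx (g x)) /\
  (exists L, forall x y, Cmod (Cminus (g x) (g y)) <= L * d x y) /\
  g z = RtoC 0.

Definition lip_le1 {N : Type} (d : N -> N -> R) (g : N -> C) : Prop :=
  forall x y, Cmod (Cminus (g x) (g y)) <= d x y.

(* Evaluation of the finite combination sum_i a_i delta(x_i) at g. *)
Definition eval_comb {N : Type} (l : list (C * N)) (g : N -> C) : C :=
  fold_right (fun p acc => Cplus (Cmult (fst p) (g (snd p))) acc) (RtoC 0) l.

(* gamma : Lip_0(N) -> K belongs to F(N): it is K-linear on Lip_0(N), and lies in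
   the dual-norm closure of span{delta(x) : x in N}. *)
Definition in_free (cplx : bool) {N : Type} (d : N -> N -> R) (z : N)
  (gamma : (N -> C) -> C) : Prop :=
  (forall g, Lip0 cplx d z g -> in_K cplx (gamma g)) /\
  (forall g h, Lip0 cplx d z g -> Lip0 cplx d z h ->
     gamma (fun x => Cplus (g x) (h x)) = Cplus (gamma g) (gamma h)) /\
  (forall a g, in_K cplx a -> Lip0 cplx d z g ->
     gamma (fun x => Cmult a (g x)) = Cmult a (gamma g)) /\
  (forall eps, 0 < eps -> exists l : list (C * N),
     List.Forall (fun p => in_K cplx (fst p)) l /\
     forall g, Lip0 cplx d z g -> lip_le1 d g ->
       Cmod (Cminus (gamma g) (eval_comb l g)) <= eps).

Definition molecule {M N : Type} (dM : M -> M -> R) (f : M -> N) (x y : M)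
  (g : N -> C) : C :=
  Cmult (RtoC (/ dM x y)) (Cminus (g (f x)) (g (f y))).

Definition weak_cvg (cplx : bool) {N : Type} (d : N -> N -> R) (z : N)
  (m : nat -> (N -> C) -> C) (gamma : (N -> C) -> C) : Prop :=
  forall g, Lip0 cplx d z g -> is_lim_seq (fun n => Cmod (Cminus (m n g) (gamma g))) 0.

Definition free_zero (cplx : bool) {N : Type} (d : N -> N -> R) (z : N)
  (gamma : (N -> C) -> C) : Prop :=
  forall g, Lip0 cplx d z g -> gamma g = RtoC 0.

From Stdlib Require Import Reals List.
From Coquelicot Require Import Coquelicot.
From Stdlib Require Import Lra Lia Classical ClassicalEpsilon FunctionalExtensionality.
Open Scope R_scope.

(* Testing against real 1-Lipschitz functions suffices, since Lip_0(N) is spanned by them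
   and elements of F(N) are determined, up to eps, by finitely many point values on the unit
   ball of Lip_0(N).
   (1) If d(x_n, y_n) -> 0 then G(f x_n) - G(f y_n) -> 0, and a contraction phi of the line
   can kill the finitely many relevant values of G while preserving these increments
   infinitely often; hence gamma(G) = gamma(phi o G), which is close to gamma(0) = 0.
   (2) If d(x_n, y_n) is unbounded, truncating G at the relevant values gives a bounded
   function with the same gamma up to eps, whose molecules are frequently small.
   (3) By (2) the distances are bounded, and gamma <> 0 gives d(f x_n, f y_n) >= beta
   eventually. If for every r the pairs (f x_n, f y_n) eventually lie r-close to a finite set,
   nested refinements and completeness of N produce an accumulation point. Otherwise,
   infinitely often some point of the pair is r-far from all earlier ones; a sum of disjoint
   tents around these points, with signs chosen inductively, is a Lipschitz function whose
   molecules along this subsequence oscillate, contradicting weak convergence. *)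

Definition frequently (P : nat -> Prop) : Prop :=
  forall n0, exists n, (n0 <= n)%nat /\ P n.

Lemma Cmod_minus_triangle (a b c : C) :
  Cmod (Cminus a c) <= Cmod (Cminus a b) + Cmod (Cminus b c).
Proof.
  replace (Cminus a c) with (Cplus (Cminus a b) (Cminus b c)) by (unfold Cminus; ring).
  apply Cmod_triangle.
Qed.

Lemma Cmod_minus_sym (a b : C) : Cmod (Cminus a b) = Cmod (Cminus b a).
Proof.
  replace (Cminus a b) with (Copp (Cminus b a)) by (unfold Cminus; ring).
  apply Cmod_opp.
Qed.

Lemma Cmod_RtoC_minus (a b : R) : Cmod (Cminus (RtoC a) (RtoC b)) = Rabs (a - b).
Proof.
  replace (Cminus (RtoC a) (RtoC b)) with (RtoC (a - b))
    by (apply injective_projections; simpl; ring).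
  apply Cmod_R.
Qed.

Lemma Cmult_RtoC_minus (c a b : R) :
  Cmult (RtoC c) (Cminus (RtoC a) (RtoC b)) = RtoC (c * (a - b)).
Proof. apply injective_projections; simpl; ring. Qed.

Lemma Cminus_eq_of_Cmod_small (a b : C) :
  (forall eps, 0 < eps -> Cmod (Cminus a b) <= eps) -> a = b.
Proof.
  intros Hsmall.
  assert (H0 : Cmod (Cminus a b) = 0).
  { apply Rle_antisym; [|apply Cmod_ge_0].
    apply Rnot_lt_le; intros Hpos.
    specialize (Hsmall (Cmod (Cminus a b) / 2) ltac:(lra)); lra. }
  apply Cmod_eq_0 in H0.
  replace a with (Cplus (Cminus a b) b) by (unfold Cminus; ring).
  rewrite H0; ring.
Qed.

Lemma is_lim_seq_Cmod_eventually (u : nat -> C) (l : C) :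
  is_lim_seq (fun n => Cmod (Cminus (u n) l)) 0 ->
  forall eps, 0 < eps -> exists N, forall n, (N <= n)%nat -> Cmod (Cminus (u n) l) < eps.
Proof.
  intros Hlim eps Heps.
  apply is_lim_seq_spec in Hlim.
  destruct (Hlim (mkposreal eps Heps)) as [N HN].
  exists N; intros n Hn; specialize (HN n Hn); simpl in HN.
  now rewrite Rminus_0_r, Rabs_pos_eq in HN by apply Cmod_ge_0.
Qed.

Lemma lim_eq_of_frequently_eq (u v : nat -> C) (a b : C) :
  is_lim_seq (fun n => Cmod (Cminus (u n) a)) 0 ->
  is_lim_seq (fun n => Cmod (Cminus (v n) b)) 0 ->
  frequently (fun n => u n = v n) -> a = b.
Proof.
  intros Hu Hv Hfreq; apply Cminus_eq_of_Cmod_small; intros eps Heps.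
  destruct (is_lim_seq_Cmod_eventually _ _ Hu (eps / 2)) as [N1 H1]; [lra|].
  destruct (is_lim_seq_Cmod_eventually _ _ Hv (eps / 2)) as [N2 H2]; [lra|].
  destruct (Hfreq (N1 + N2)%nat) as [n [Hn Euv]].
  specialize (H1 n ltac:(lia)); specialize (H2 n ltac:(lia)).
  rewrite Euv, Cmod_minus_sym in H1.
  pose proof (Cmod_minus_triangle a (v n) b); lra.
Qed.

Lemma lim_zero_of_frequently_small (u : nat -> C) (a : C) :
  is_lim_seq (fun n => Cmod (Cminus (u n) a)) 0 ->
  (forall eta, 0 < eta -> frequently (fun n => Cmod (u n) < eta)) -> a = RtoC 0.
Proof.
  intros Hu Hfreq; apply Cminus_eq_of_Cmod_small; intros eps Heps.
  destruct (is_lim_seq_Cmod_eventually _ _ Hu (eps / 2)) as [N1 H1]; [lra|].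
  destruct (Hfreq (eps / 2) ltac:(lra) N1) as [n [Hn Hsmall]].
  specialize (H1 n Hn); rewrite Cmod_minus_sym in H1.
  pose proof (Cmod_minus_triangle a (u n) (RtoC 0)) as T.
  replace (Cminus (u n) (RtoC 0)) with (u n) in T by (unfold Cminus; ring).
  lra.
Qed.

Lemma Cauchy_crit_subseq (u : nat -> R) (l : C) (nk : nat -> nat) :
  is_lim_seq (fun n => Cmod (Cminus (RtoC (u n)) l)) 0 -> (forall k, (k <= nk k)%nat) ->
  Cauchy_crit (fun k => u (nk k)).
Proof.
  intros Hlim Hnk eps Heps.
  destruct (is_lim_seq_Cmod_eventually _ _ Hlim (eps / 2)) as [K HK]; [lra|].
  exists K; intros j k Hj Hk; unfold Rdist.
  rewrite <- Cmod_RtoC_minus.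
  pose proof (HK (nk j) ltac:(specialize (Hnk j); lia)).
  pose proof (HK (nk k) ltac:(specialize (Hnk k); lia)).
  pose proof (Cmod_minus_triangle (RtoC (u (nk j))) l (RtoC (u (nk k)))).
  rewrite (Cmod_minus_sym l) in H1; lra.
Qed.

Lemma not_Cauchy_crit_of_steps (u : nat -> R) (c : R) :
  0 < c -> (forall k, c <= Rabs (u (S k) - u k)) -> ~ Cauchy_crit u.
Proof.
  intros Hc Hstep Hcau.
  destruct (Hcau c Hc) as [K HK].
  specialize (HK (S K) K ltac:(lia) ltac:(lia)); unfold Rdist in HK.
  specialize (Hstep K); lra.
Qed.

Lemma frequently_gt_of_unbounded (u : nat -> R) :
  ~ (exists B, forall n, u n <= B) -> forall B, frequently (fun n => B < u n).
Proof.
  intros Hunb B n0; apply NNPP; intros Hnot; apply Hunb.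
  assert (Hprefix : exists C, forall n, (n < n0)%nat -> u n <= C).
  { clear Hnot; induction n0 as [|n0 [C HC]]; [exists 0; intros; lia|].
    exists (Rmax C (u n0)); intros n Hn.
    destruct (Nat.eq_dec n n0) as [->|Hne]; [apply Rmax_r|].
    eapply Rle_trans; [apply HC; lia|apply Rmax_l]. }
  destruct Hprefix as [C HC]; exists (Rmax B C); intros n.
  destruct (Nat.lt_ge_cases n n0) as [Hlt|Hge].
  - eapply Rle_trans; [apply HC, Hlt|apply Rmax_r].
  - eapply Rle_trans; [|apply Rmax_l].
    apply Rnot_lt_le; intros Hlt; apply Hnot; eauto.
Qed.

Section MetricFacts.

Context {N : Type} (d : N -> N -> R) (hd : is_metric d).

Lemma dist_refl a : d a a = 0.
Proof. now apply hd. Qed.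

Lemma dist_sym a b : d a b = d b a.
Proof. apply hd. Qed.

Lemma dist_triangle a b c : d a c <= d a b + d b c.
Proof. apply hd. Qed.

Lemma dist_nonneg a b : 0 <= d a b.
Proof.
  pose proof (dist_triangle a b a) as H; rewrite dist_refl, (dist_sym b a) in H; lra.
Qed.

Lemma dist_pos a b : a <> b -> 0 < d a b.
Proof.
  intros Hne; destruct (Rle_lt_or_eq_dec _ _ (dist_nonneg a b)) as [|Hz]; [assumption|].
  exfalso; apply Hne, hd; now symmetry.
Qed.

End MetricFacts.

Definition real_lip1 {N : Type} (d : N -> N -> R) (z : N) (G : N -> R) : Prop :=
  G z = 0 /\ forall a b, Rabs (G a - G b) <= d a b.

Lemma Lip0_plus (cplx : bool) {N : Type} (d : N -> N -> R) (z : N) (g h : N -> C) :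
  Lip0 cplx d z g -> Lip0 cplx d z h -> Lip0 cplx d z (fun w => Cplus (g w) (h w)).
Proof.
  intros [Kg [[Lg HLg] Hg0]] [Kh [[Lh HLh] Hh0]]; split; [|split].
  - intros w; destruct (Kg w) as [Ht|Hgw]; [now left|destruct (Kh w) as [Ht|Hhw]; [now left|]].
    right; destruct (g w), (h w); simpl in *; lra.
  - exists (Lg + Lh); intros a b.
    replace (Cminus (Cplus (g a) (h a)) (Cplus (g b) (h b)))
      with (Cplus (Cminus (g a) (g b)) (Cminus (h a) (h b))) by (unfold Cminus; ring).
    eapply Rle_trans; [apply Cmod_triangle|specialize (HLg a b); specialize (HLh a b); lra].
  - rewrite Hg0, Hh0; apply injective_projections; simpl; ring.
Qed.

Lemma Lip0_Ci_mult {N : Type} (d : N -> N -> R) (z : N) (h : N -> C) :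
  Lip0 true d z h -> Lip0 true d z (fun w => Cmult Ci (h w)).
Proof.
  intros [_ [[L HL] Hh0]]; split; [|split].
  - intros; now left.
  - exists L; intros a b.
    replace (Cminus (Cmult Ci (h a)) (Cmult Ci (h b))) with (Cmult Ci (Cminus (h a) (h b)))
      by (unfold Cminus; ring).
    rewrite Cmod_mult, Cmod_Ci, Rmult_1_l; apply HL.
  - rewrite Hh0; apply injective_projections; simpl; ring.
Qed.

Section LipschitzFunctionals.

Context (cplx : bool) {N : Type} (d : N -> N -> R) (z : N).

Lemma Lip0_RtoC (G : N -> R) (L : R) :
  G z = 0 -> (forall a b, Rabs (G a - G b) <= L * d a b) -> Lip0 cplx d z (fun w => RtoC (G w)).
Proof.
  intros HG0 HG; split; [|split].
  - intros w; now right.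
  - exists L; intros a b; rewrite Cmod_RtoC_minus; apply HG.
  - now rewrite HG0.
Qed.

Lemma Lip0_of_real_lip1 (G : N -> R) : real_lip1 d z G -> Lip0 cplx d z (fun w => RtoC (G w)).
Proof.
  intros [HG0 HG]; apply (Lip0_RtoC G 1); auto.
  intros a b; rewrite Rmult_1_l; apply HG.
Qed.

Lemma lip_le1_of_real_lip1 (G : N -> R) : real_lip1 d z G -> lip_le1 d (fun w => RtoC (G w)).
Proof. intros [_ HG] a b; rewrite Cmod_RtoC_minus; apply HG. Qed.

Variables (gamma : (N -> C) -> C) (hgamma : in_free cplx d z gamma).

Lemma in_free_zero_fun : gamma (fun _ => RtoC 0) = RtoC 0.
Proof.
  destruct hgamma as [_ [_ [Hhom _]]].
  assert (H0 : Lip0 cplx d z (fun _ => RtoC 0)).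
  { apply (Lip0_RtoC (fun _ => 0) 0); [reflexivity|].
    intros; rewrite Rminus_diag, Rabs_R0; lra. }
  specialize (Hhom (RtoC 0) _ (or_intror eq_refl) H0).
  transitivity (gamma (fun _ => Cmult (RtoC 0) (RtoC 0))).
  { f_equal; apply functional_extensionality; intros;
      apply injective_projections; simpl; ring. }
  rewrite Hhom; apply injective_projections; simpl; ring.
Qed.

Lemma in_free_almost_local (eps : R) : 0 < eps -> exists pts : list N,
  forall g h, Lip0 cplx d z g -> lip_le1 d g -> Lip0 cplx d z h -> lip_le1 d h ->
    (forall a, In a pts -> g a = h a) -> Cmod (Cminus (gamma g) (gamma h)) <= 2 * eps.
Proof.
  intros Heps; destruct hgamma as [_ [_ [_ Happrox]]].
  destruct (Happrox eps Heps) as [l [_ Hl]].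
  exists (map snd l); intros g h Lg lg Lh lh Hgh.
  assert (Heval : eval_comb l g = eval_comb l h).
  { clear -Hgh; induction l as [|[c a] l IH]; simpl; [reflexivity|].
    rewrite (Hgh a (or_introl eq_refl)), IH; [reflexivity|].
    intros b Hb; apply Hgh; now right. }
  pose proof (Hl g Lg lg) as Hg; pose proof (Hl h Lh lh) as Hh.
  rewrite Heval in Hg; rewrite Cmod_minus_sym in Hh.
  pose proof (Cmod_minus_triangle (gamma g) (eval_comb l h) (gamma h)); lra.
Qed.

Lemma real_lip1_div (F : N -> R) (L : R) :
  0 < L -> F z = 0 -> (forall a b, Rabs (F a - F b) <= L * d a b) ->
  real_lip1 d z (fun w => F w / L).
Proof.
  intros HL HF0 HF; split; [rewrite HF0; field; lra|].
  intros a b; replace (F a / L - F b / L) with ((F a - F b) / L) by (field; lra).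
  unfold Rdiv; rewrite Rabs_mult, Rabs_inv, (Rabs_pos_eq L) by lra.
  apply (Rmult_le_reg_r L); [lra|].
  rewrite Rmult_assoc, Rinv_l, Rmult_1_r by lra; rewrite Rmult_comm; apply HF.
Qed.

Hypothesis d_nonneg : forall a b, 0 <= d a b.

Lemma Lip0_real_parts (g : N -> C) : Lip0 cplx d z g -> exists L, 0 < L /\
  real_lip1 d z (fun w => Re (g w) / L) /\ real_lip1 d z (fun w => Im (g w) / L).
Proof.
  intros [_ [[L HL] Hg0]]; exists (Rabs L + 1).
  assert (HL' : forall a b, Cmod (Cminus (g a) (g b)) <= (Rabs L + 1) * d a b).
  { intros a b; eapply Rle_trans; [apply HL|].
    apply Rmult_le_compat_r; [apply d_nonneg|pose proof (Rle_abs L); lra]. }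
  pose proof (Rabs_pos L).
  split; [lra|split; apply real_lip1_div; try lra; try (rewrite Hg0; reflexivity)];
    intros a b; eapply Rle_trans; try apply (HL' a b).
  - replace (Re (g a) - Re (g b)) with (Re (Cminus (g a) (g b)))
      by (destruct (g a), (g b); unfold Cminus, Cplus, Copp; simpl; ring).
    apply re_le_Cmod.
  - replace (Im (g a) - Im (g b)) with (Im (Cminus (g a) (g b)))
      by (destruct (g a), (g b); unfold Cminus, Cplus, Copp; simpl; ring).
    eapply Rle_trans; [apply Rmax_r|apply Rmax_Cmod].
Qed.

Lemma free_zero_of_real_lip1 :
  (forall G, real_lip1 d z G -> gamma (fun w => RtoC (G w)) = RtoC 0) ->
  free_zero cplx d z gamma.
Proof.
  intros Hreal g Hg.
  destruct (Lip0_real_parts g Hg) as [L [HL [Hre Him]]].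
  set (Gr := fun w => Re (g w) / L) in *; set (Gi := fun w => Im (g w) / L) in *.
  pose proof (Lip0_of_real_lip1 _ Hre) as LGr; pose proof (Lip0_of_real_lip1 _ Him) as LGi.
  destruct hgamma as [_ [Hadd [Hhom _]]].
  destruct cplx.
  - pose proof (Lip0_plus true d z _ _ LGr (Lip0_Ci_mult d z _ LGi)) as LS.
    replace g with (fun w => Cmult (RtoC L) (Cplus (RtoC (Gr w)) (Cmult Ci (RtoC (Gi w))))).
    2:{ apply functional_extensionality; intros w; unfold Gr, Gi.
        destruct (g w); apply injective_projections; simpl; field; lra. }
    rewrite Hhom, Hadd, Hhom, (Hreal Gr Hre), (Hreal Gi Him)
      by (auto using Lip0_Ci_mult; (now left) || (now right)).
    apply injective_projections; simpl; ring.
  - replace g with (fun w => Cmult (RtoC L) (RtoC (Gr w))).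
    2:{ apply functional_extensionality; intros w; unfold Gr.
        destruct Hg as [HK _]; destruct (HK w) as [Hf|Him0]; [discriminate|].
        destruct (g w) as [a b]; simpl in Him0; subst b.
        apply injective_projections; simpl; field; lra. }
    rewrite Hhom, (Hreal Gr Hre) by (auto; now right).
    apply injective_projections; simpl; ring.
Qed.

End LipschitzFunctionals.

Definition clamp (c t : R) : R := Rmax (- c) (Rmin t c).

Definition cutoff (r t : R) : R := 2 * clamp r t - clamp (2 * r) t.

Definition soft_threshold (c t : R) : R := t - clamp c t.

Ltac piecewise_linear :=
  unfold cutoff, soft_threshold, clamp, Rmax, Rmin, Rabs in *;
  repeat (destruct Rle_dec || destruct Rcase_abs); lra.

Lemma clamp_lip c t u : 0 <= c -> Rabs (clamp c t - clamp c u) <= Rabs (t - u).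
Proof. intros; piecewise_linear. Qed.
Lemma clamp_id c t : Rabs t <= c -> clamp c t = t.
Proof. intros; piecewise_linear. Qed.
Lemma clamp_bound c t : 0 <= c -> Rabs (clamp c t) <= c.
Proof. intros; piecewise_linear. Qed.

Lemma cutoff_lip r t u : 0 < r -> Rabs (cutoff r t - cutoff r u) <= Rabs (t - u).
Proof. intros; piecewise_linear. Qed.
Lemma cutoff_id r t : 0 < r -> Rabs t <= r -> cutoff r t = t.
Proof. intros; piecewise_linear. Qed.
Lemma cutoff_zero r t : 0 < r -> 2 * r <= Rabs t -> cutoff r t = 0.
Proof. intros; piecewise_linear. Qed.

Lemma soft_threshold_lip c t u : 0 <= c ->
  Rabs (soft_threshold c t - soft_threshold c u) <= Rabs (t - u).
Proof. intros; piecewise_linear. Qed.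
Lemma soft_threshold_zero c t : Rabs t <= c -> soft_threshold c t = 0.
Proof. intros; piecewise_linear. Qed.
Lemma soft_threshold_diff c t u : 0 <= c -> c + 1 < Rabs t -> Rabs (t - u) < 1 ->
  soft_threshold c t - soft_threshold c u = t - u.
Proof. intros; piecewise_linear. Qed.

Lemma list_Rabs_bound (F : list R) : exists c, 0 <= c /\ forall t, In t F -> Rabs t <= c.
Proof.
  induction F as [|a F [c [Hc HF]]]; [exists 0; split; [lra|intros t []]|].
  exists (Rmax c (Rabs a)); split; [eapply Rle_trans; [exact Hc|apply Rmax_l]|].
  intros t [<-|Ht]; [apply Rmax_r|eapply Rle_trans; [apply HF, Ht|apply Rmax_l]].
Qed.

Lemma list_separated_from (F : list R) (s : R) :
  exists r, 0 < r /\ forall t, In t F -> t = s \/ 2 * r <= Rabs (t - s).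
Proof.
  induction F as [|a F [r [Hr HF]]]; [exists 1; split; [lra|intros t []]|].
  destruct (Req_dec a s) as [->|Hne].
  - exists r; split; auto; intros t [<-|Ht]; auto.
  - assert (Has : 0 < Rabs (a - s)) by (apply Rabs_pos_lt; lra).
    exists (Rmin r (Rabs (a - s) / 2)); split; [apply Rmin_glb_lt; lra|].
    pose proof (Rmin_l r (Rabs (a - s) / 2)); pose proof (Rmin_r r (Rabs (a - s) / 2)).
    intros t [<-|Ht]; [right; lra|].
    destruct (HF t Ht) as [|Hfar]; [now left|right; lra].
Qed.

Definition contraction_on_R (phi : R -> R) : Prop :=
  forall t u, Rabs (phi t - phi u) <= Rabs (t - u).

(* If a_n - b_n -> 0, a contraction of R can kill any finite set while preserving the
   increments a_n - b_n infinitely often: a [cutoff] around a cluster value of (a_n) if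
   (a_n) is frequently bounded, a [soft_threshold] beyond the finite set otherwise. *)
Lemma contraction_bounded_case (F : list R) (a b : nat -> R) (K : R) :
  is_lim_seq (fun n => a n - b n) 0 -> frequently (fun n => Rabs (a n) <= K) ->
  exists phi, contraction_on_R phi /\ (forall t, In t F -> phi t = 0) /\
    frequently (fun n => phi (a n) - phi (b n) = a n - b n).
Proof.
  intros Hab HK; apply is_lim_seq_spec in Hab.
  set (sub := fun n => epsilon (inhabits 0%nat) (fun m => (n <= m)%nat /\ Rabs (a m) <= K)).
  assert (Hsub : forall n, (n <= sub n)%nat /\ Rabs (a (sub n)) <= K).
  { intros n; unfold sub; apply epsilon_spec; apply HK. }
  destruct (Bolzano_Weierstrass (fun n => a (sub n)) _ (compact_P3 (- K) K)) as [s Hs].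
  { intros n; destruct (Hsub n) as [_ Hn]; apply Rabs_le_between; exact Hn. }
  destruct (list_separated_from F s) as [r [Hr HF]].
  exists (fun t => cutoff r (t - s)); split; [|split].
  - intros t u; replace (t - u) with ((t - s) - (u - s)) by ring; apply cutoff_lip, Hr.
  - intros t Ht; destruct (HF t Ht) as [->|Hfar].
    + rewrite Rminus_diag; apply cutoff_id; [exact Hr|rewrite Rabs_R0; lra].
    + now apply cutoff_zero.
  - intros n0; destruct (Hab (mkposreal (r / 2) ltac:(lra))) as [N1 HN1]; simpl in HN1.
    destruct (Hs (disc s (mkposreal (r / 2) ltac:(lra))) (n0 + N1)%nat) as [m [Hm Hclose]].
    { exists (mkposreal (r / 2) ltac:(lra)); intros t Ht; exact Ht. }
    destruct (Hsub m) as [Hm' _]; exists (sub m); split; [lia|].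
    unfold disc in Hclose; simpl in Hclose; specialize (HN1 (sub m) ltac:(lia)).
    rewrite Rminus_0_r in HN1.
    rewrite !cutoff_id; [ring|exact Hr| |exact Hr|lra].
    replace (b (sub m) - s) with ((a (sub m) - s) - (a (sub m) - b (sub m))) by ring.
    eapply Rle_trans; [apply Rabs_triang|rewrite Rabs_Ropp; lra].
Qed.

Lemma contraction_unbounded_case (F : list R) (a b : nat -> R) :
  is_lim_seq (fun n => a n - b n) 0 -> ~ (exists K, frequently (fun n => Rabs (a n) <= K)) ->
  exists phi, contraction_on_R phi /\ (forall t, In t F -> phi t = 0) /\
    frequently (fun n => phi (a n) - phi (b n) = a n - b n).
Proof.
  intros Hab HK; apply is_lim_seq_spec in Hab.
  destruct (list_Rabs_bound F) as [c [Hc HF]].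
  exists (soft_threshold c); split; [|split].
  - intros t u; now apply soft_threshold_lip.
  - intros t Ht; apply soft_threshold_zero, HF, Ht.
  - intros n0; destruct (Hab (mkposreal 1 Rlt_0_1)) as [N1 HN1]; simpl in HN1.
    assert (Hbig : ~ frequently (fun n => Rabs (a n) <= c + 1)) by (intros H; apply HK; eauto).
    apply not_all_ex_not in Hbig; destruct Hbig as [N2 HN2].
    exists (n0 + N1 + N2)%nat; split; [lia|].
    apply soft_threshold_diff; [exact Hc| |].
    + apply Rnot_le_lt; intros Hle; apply HN2; exists (n0 + N1 + N2)%nat; split; [lia|exact Hle].
    + specialize (HN1 (n0 + N1 + N2)%nat ltac:(lia)); now rewrite Rminus_0_r in HN1.
Qed.

Lemma contraction_matching_frequently (F : list R) (a b : nat -> R) :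
  is_lim_seq (fun n => a n - b n) 0 ->
  exists phi, contraction_on_R phi /\ (forall t, In t F -> phi t = 0) /\
    frequently (fun n => phi (a n) - phi (b n) = a n - b n).
Proof.
  intros Hab; destruct (classic (exists K, frequently (fun n => Rabs (a n) <= K))) as [[K HK]|HK].
  - exact (contraction_bounded_case F a b K Hab HK).
  - exact (contraction_unbounded_case F a b Hab HK).
Qed.

Section SpreadSigns.

Variables (V : (nat -> R) -> nat -> R -> R) (c : R).
Hypothesis V_local : forall e e' k s, (forall i, (i < k)%nat -> e i = e' i) -> V e k s = V e' k s.
Hypothesis V_spread : forall e k, 2 * c <= Rabs (V e k 1 - V e k (-1)).

Definition next_sign (e : nat -> R) (k : nat) : R :=
  if Rle_dec c (Rabs (V e (S k) 1 - V e k (e k))) then 1 else -1.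

Lemma next_sign_spec e k : c <= Rabs (V e (S k) (next_sign e k) - V e k (e k)).
Proof.
  unfold next_sign; destruct Rle_dec as [Hle|Hlt]; [exact Hle|apply Rnot_le_lt in Hlt].
  pose proof (V_spread e (S k)) as Hspread.
  pose proof (Rabs_triang (V e (S k) 1 - V e k (e k)) (V e k (e k) - V e (S k) (-1))).
  rewrite (Rabs_minus_sym (V e k (e k))) in H.
  replace (V e (S k) 1 - V e k (e k) + (V e k (e k) - V e (S k) (-1)))
    with (V e (S k) 1 - V e (S k) (-1)) in H by ring.
  lra.
Qed.

(* [sign_prefix k] holds the signs chosen at indices [<= k]. *)
Fixpoint sign_prefix (k : nat) : nat -> R :=
  match k with
  | O => fun _ => 1
  | S k' => fun i => if Nat.eq_dec i k then next_sign (sign_prefix k') k' else sign_prefix k' i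
  end.

Definition spread_signs (i : nat) : R := sign_prefix i i.

Lemma sign_prefix_agree k i : (i <= k)%nat -> sign_prefix k i = spread_signs i.
Proof.
  induction k as [|k IH]; intros Hik; unfold spread_signs.
  - now replace i with 0%nat by lia.
  - simpl; destruct (Nat.eq_dec i (S k)) as [->|Hne]; [simpl; now destruct Nat.eq_dec|].
    apply IH; lia.
Qed.

Lemma spread_signs_unit k : Rabs (spread_signs k) = 1.
Proof.
  unfold spread_signs; destruct k as [|k]; simpl; [apply Rabs_R1|].
  destruct Nat.eq_dec as [_|]; [|lia]; unfold next_sign.
  destruct Rle_dec; unfold Rabs; destruct Rcase_abs; lra.
Qed.

Lemma spread_signs_steps k :
  c <= Rabs (V spread_signs (S k) (spread_signs (S k)) - V spread_signs k (spread_signs k)).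
Proof.
  assert (Hagree : forall i, (i < S k)%nat -> spread_signs i = sign_prefix k i)
    by (intros; symmetry; apply sign_prefix_agree; lia).
  assert (Htop : spread_signs (S k) = next_sign (sign_prefix k) k)
    by (unfold spread_signs; simpl; now destruct Nat.eq_dec).
  rewrite Htop, (V_local _ (sign_prefix k) (S k)), (V_local _ (sign_prefix k) k),
    (Hagree k) by (auto || (intros; apply Hagree; lia)).
  apply next_sign_spec.
Qed.

End SpreadSigns.

Section DisjointTents.

Context {N : Type} (d : N -> N -> R) (hd : is_metric d) (w : nat -> N) (rho : R).
Hypothesis tents_disjoint : forall i j z, d z (w i) < rho -> d z (w j) < rho -> i = j.

Definition tent (c z : N) : R := Rmax 0 (rho - d z c).

(* [j] is the index of the ball containing [z], if any; otherwise [z] lies in no ball and any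
   index will do, since every tent vanishes at [z]. *)
Definition tent_sum (e : nat -> R) (z : N) : R :=
  let j := epsilon (inhabits 0%nat) (fun j => d z (w j) < rho) in e j * tent (w j) z.

Lemma tent_out c z : rho <= d z c -> tent c z = 0.
Proof. intros H; unfold tent, Rmax; destruct Rle_dec; lra. Qed.

Lemma tent_center c : 0 <= rho -> tent c c = rho.
Proof. intros H; unfold tent; rewrite dist_refl, Rminus_0_r by exact hd; now apply Rmax_right. Qed.

Lemma tent_lip c a b : Rabs (tent c a - tent c b) <= d a b.
Proof.
  pose proof (dist_triangle d hd a b c); pose proof (dist_triangle d hd b a c).
  rewrite (dist_sym d hd b a) in H0.
  unfold tent, Rmax, Rabs; repeat (destruct Rle_dec || destruct Rcase_abs); lra.
Qed.

Lemma ball_index z : exists j, forall i, i <> j -> rho <= d z (w i).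
Proof.
  destruct (classic (exists j, d z (w j) < rho)) as [[j Hj]|Hnone].
  - exists j; intros i Hij; apply Rnot_lt_le; intros Hi; apply Hij; eauto.
  - exists 0%nat; intros i _; apply Rnot_lt_le; intros Hi; apply Hnone; eauto.
Qed.

Lemma tent_sum_eq e z j : (forall i, i <> j -> rho <= d z (w i)) ->
  tent_sum e z = e j * tent (w j) z.
Proof.
  intros Hout; unfold tent_sum; set (i := epsilon _ _).
  destruct (Nat.eq_dec i j) as [->|Hij]; [reflexivity|].
  assert (Hj : rho <= d z (w j)).
  { apply Rnot_lt_le; intros Hj; apply (Rlt_not_le _ _ (epsilon_spec (inhabits 0%nat)
      (fun j => d z (w j) < rho) (ex_intro _ j Hj))), Hout, Hij. }
  rewrite (tent_out (w i) z (Hout i Hij)), (tent_out (w j) z Hj); ring.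
Qed.

Lemma tent_sum_center e k : 0 <= rho -> tent_sum e (w k) = e k * rho.
Proof.
  intros Hrho; rewrite (tent_sum_eq e (w k) k), tent_center; [reflexivity|exact Hrho|].
  intros i Hik; apply Rnot_lt_le; intros Hi; apply Hik.
  apply (tents_disjoint i k (w k) Hi); rewrite dist_refl by exact hd.
  pose proof (dist_nonneg d hd (w k) (w i)); lra.
Qed.

Lemma tent_sum_zero e z : (forall j, rho <= d z (w j)) -> tent_sum e z = 0.
Proof. intros Hout; rewrite (tent_sum_eq e z 0), tent_out; auto; ring. Qed.

Lemma tent_sum_local e e' k z : (forall j, (k <= j)%nat -> rho <= d z (w j)) ->
  (forall i, (i < k)%nat -> e i = e' i) -> tent_sum e z = tent_sum e' z.
Proof.
  intros Hfar Hee'; destruct (ball_index z) as [j Hj].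
  rewrite (tent_sum_eq e z j Hj), (tent_sum_eq e' z j Hj).
  destruct (Nat.lt_ge_cases j k) as [Hlt|Hge]; [now rewrite Hee'|].
  rewrite tent_out by auto; ring.
Qed.

Lemma tent_sum_lip e : (forall j, Rabs (e j) = 1) ->
  forall a b, Rabs (tent_sum e a - tent_sum e b) <= 2 * d a b.
Proof.
  intros He a b.
  assert (Hterm : forall j, Rabs (e j * tent (w j) a - e j * tent (w j) b) <= d a b).
  { intros j; rewrite <- Rmult_minus_distr_l, Rabs_mult, He, Rmult_1_l; apply tent_lip. }
  pose proof (dist_nonneg d hd a b).
  destruct (ball_index a) as [i Hi]; destruct (ball_index b) as [j Hj].
  rewrite (tent_sum_eq e a i Hi), (tent_sum_eq e b j Hj).
  destruct (Nat.eq_dec i j) as [<-|Hij]; [specialize (Hterm i); lra|].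
  (* [b] is outside the tent at [w i] and [a] outside the one at [w j]. *)
  replace (e i * tent (w i) a - e j * tent (w j) b) with
    ((e i * tent (w i) a - e i * tent (w i) b) + (e j * tent (w j) a - e j * tent (w j) b)).
  - eapply Rle_trans; [apply Rabs_triang|pose proof (Hterm i); pose proof (Hterm j); lra].
  - rewrite (tent_out (w i) b (Hj i Hij)), (tent_out (w j) a (Hi j (not_eq_sym Hij))); ring.
Qed.

End DisjointTents.

Section SeparatedMolecules.

Context {N : Type} (d : N -> N -> R) (hd : is_metric d).
Variables (z0 : N) (w v : nat -> N) (side : nat -> bool) (D : nat -> R) (r beta B : R).
Hypotheses (r_pos : 0 < r) (beta_pos : 0 < beta).
Hypothesis D_bounds : forall k, 0 < D k <= B.
Hypothesis w_far_prev : forall j k, (j < k)%nat -> r <= d (w k) (w j) /\ r <= d (w k) (v j).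
Hypothesis w_far_z0 : forall k, r <= d (w k) z0.
Hypothesis w_far_v : forall k, beta <= d (w k) (v k).

Definition oriented_mol (G : N -> R) (k : nat) : R :=
  / D k * (if side k then G (w k) - G (v k) else G (v k) - G (w k)).

Lemma exists_lip_not_Cauchy_oriented_mol : exists G : N -> R,
  G z0 = 0 /\ (forall a b, Rabs (G a - G b) <= 2 * d a b) /\ ~ Cauchy_crit (oriented_mol G).
Proof.
  set (rho := Rmin (r / 2) (beta / 2)).
  assert (Hrho : 0 < rho /\ rho <= r / 2 /\ rho <= beta / 2).
  { split; [apply Rmin_glb_lt; lra|split; [apply Rmin_l|apply Rmin_r]]. }
  assert (Hdisj : forall i j z, d z (w i) < rho -> d z (w j) < rho -> i = j).
  { intros i j z Hi Hj; apply NNPP; intros Hij.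
    assert (Hsep : r <= d (w i) (w j)).
    { destruct (Nat.lt_gt_cases i j) as [[Hlt|Hgt] _]; [exact Hij| |].
      - rewrite dist_sym by exact hd; now apply w_far_prev.
      - now apply w_far_prev. }
    pose proof (dist_triangle d hd (w i) z (w j)); rewrite (dist_sym d hd (w i) z) in H; lra. }
  set (V := fun e k s => / D k *
    (if side k then s * rho - tent_sum d w rho e (v k) else tent_sum d w rho e (v k) - s * rho)).
  assert (HB : 0 < B) by (specialize (D_bounds 0%nat); lra).
  assert (V_local : forall e e' k s, (forall i, (i < k)%nat -> e i = e' i) -> V e k s = V e' k s).
  { intros e e' k s Hee'; unfold V; rewrite (tent_sum_local d w rho Hdisj e e' k); auto.
    intros j Hkj; rewrite dist_sym by exact hd.
    destruct (Nat.eq_dec j k) as [->|Hne]; [specialize (w_far_v k); lra|].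
    destruct (w_far_prev k j ltac:(lia)); lra. }
  assert (V_spread : forall e k, 2 * (rho / B) <= Rabs (V e k 1 - V e k (-1))).
  { intros e k; specialize (D_bounds k).
    assert (Hstep : Rabs (V e k 1 - V e k (-1)) = 2 * rho / D k).
    { unfold V; destruct (side k);
        [replace (_ - _) with (2 * rho / D k) by (field; lra)
        |replace (_ - _) with (- (2 * rho / D k)) by (field; lra); rewrite Rabs_Ropp];
        apply Rabs_pos_eq, Rlt_le, Rdiv_lt_0_compat; lra. }
    rewrite Hstep; unfold Rdiv; rewrite <- Rmult_assoc.
    apply Rmult_le_compat_l; [lra|apply Rinv_le_contravar; lra]. }
  set (e := spread_signs V (rho / B)).
  exists (tent_sum d w rho e); split; [|split].
  - apply tent_sum_zero; intros j; rewrite dist_sym by exact hd; specialize (w_far_z0 j); lra.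
  - apply (tent_sum_lip d hd w rho Hdisj), spread_signs_unit.
  - apply (not_Cauchy_crit_of_steps _ (rho / B)); [apply Rdiv_lt_0_compat; lra|].
    assert (Hmol : forall k, oriented_mol (tent_sum d w rho e) k = V e k (e k)).
    { intros k; unfold oriented_mol, V; rewrite (tent_sum_center d hd w rho Hdisj) by lra.
      now destruct (side k). }
    intros k; rewrite !Hmol; apply (spread_signs_steps V (rho / B) V_local V_spread).
Qed.

End SeparatedMolecules.

Lemma frequently_pigeonhole {A : Type} (Z : list A) (P : nat -> Prop) (Q : A -> nat -> Prop) :
  frequently P -> (forall n, P n -> exists z, In z Z /\ Q z n) ->
  exists z, In z Z /\ frequently (fun n => P n /\ Q z n).
Proof.
  revert P; induction Z as [|a Z IH]; intros P HP Hcover.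
  - destruct (HP 0%nat) as [n [_ Hn]]; destruct (Hcover n Hn) as [z [[] _]].
  - destruct (classic (frequently (fun n => P n /\ Q a n))) as [Hfreq|Hfreq];
      [exists a; split; [now left|exact Hfreq]|].
    apply not_all_ex_not in Hfreq; destruct Hfreq as [n0 Hn0].
    destruct (IH (fun n => P n /\ ~ Q a n)) as [z [Hz Hfz]].
    + intros m; destruct (HP (m + n0)%nat) as [n [Hn Pn]].
      exists n; split; [lia|split; [exact Pn|]].
      intros HQ; apply Hn0; exists n; split; [lia|auto].
    + intros n [Pn HQ]; destruct (Hcover n Pn) as [z [[<-|Hz] Hzn]]; [contradiction|eauto].
    + exists z; split; [now right|].
      intros m; destruct (Hfz m) as [n [Hn [[Pn _] HQ]]]; eauto.
Qed.

Section NestedRefinement.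

Variables (A : Type) (a0 : A) (ball : A -> nat -> nat -> Prop).
Hypothesis refine : forall (P : nat -> Prop) k, frequently P ->
  exists c, frequently (fun n => P n /\ ball c k n).

Definition refine_center (k : nat) (P : nat -> Prop) : A :=
  epsilon (inhabits a0) (fun c => frequently (fun n => P n /\ ball c k n)).

Fixpoint refined (k : nat) : nat -> Prop :=
  match k with
  | O => fun _ => True
  | S k' => fun n => refined k' n /\ ball (refine_center k' (refined k')) k' n
  end.

Lemma refined_frequently k : frequently (refined k).
Proof.
  induction k as [|k IH]; [intros n0; exists n0; split; [lia|exact I]|].
  exact (epsilon_spec (inhabits a0) _ (refine _ k IH)).
Qed.

Lemma frequently_nested : exists c : nat -> A,
  forall k, frequently (fun n => forall j, (j <= k)%nat -> ball (c j) j n).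
Proof.
  exists (fun k => refine_center k (refined k)); intros k n0.
  destruct (refined_frequently (S k) n0) as [n [Hn Hk]]; exists n; split; [exact Hn|].
  clear Hn; revert Hk; induction k as [|k IH]; intros [Hk Hball] j Hj.
  - now replace j with 0%nat by lia.
  - destruct (Nat.eq_dec j (S k)) as [->|Hne]; [exact Hball|apply IH; [exact Hk|lia]].
Qed.

End NestedRefinement.

Definition inv_succ (k : nat) : R := / INR (S k).

Lemma inv_succ_pos k : 0 < inv_succ k.
Proof. apply Rinv_0_lt_compat, lt_0_INR; lia. Qed.

Lemma inv_succ_antitone j k : (j <= k)%nat -> inv_succ k <= inv_succ j.
Proof. intros H; apply Rinv_le_contravar; [apply lt_0_INR; lia|apply le_INR; lia]. Qed.

Lemma inv_succ_small eps : 0 < eps -> exists K, inv_succ K < eps.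
Proof.
  intros Heps; destruct (archimed_cor1 eps Heps) as [M [HM HM0]].
  exists (M - 1)%nat; unfold inv_succ; now replace (S (M - 1)) with M by lia.
Qed.

Section CoveredSequences.

Context {N : Type} (d : N -> N -> R) (hd : is_metric d) (hc : complete_metric d).

Definition near_list (Z : list N) (r : R) (a : N) : Prop := exists z, In z Z /\ d a z < r.

Lemma complete_limit_of_inv_succ_Cauchy (u : nat -> N) :
  (forall j k, d (u j) (u k) < inv_succ j + inv_succ k) ->
  exists l, forall eps, 0 < eps -> exists K, forall k, (K <= k)%nat -> d (u k) l < eps.
Proof.
  intros Hu; destruct (hc u) as [l Hl].
  - intros eps Heps; destruct (inv_succ_small (eps / 2)) as [K HK]; [lra|].
    exists K; intros m n Hm Hn; pose proof (Hu m n).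
    pose proof (inv_succ_antitone K m Hm); pose proof (inv_succ_antitone K n Hn); lra.
  - exists l; intros eps Heps; apply is_lim_seq_spec in Hl.
    destruct (Hl (mkposreal eps Heps)) as [K HK].
    exists K; intros k Hk; specialize (HK k Hk); simpl in HK.
    rewrite Rminus_0_r in HK; eapply Rle_lt_trans; [apply Rle_abs|exact HK].
Qed.

Variables (p q : nat -> N).

Definition pair_ball (c : N * N) (k n : nat) : Prop :=
  d (p n) (fst c) < inv_succ k /\ d (q n) (snd c) < inv_succ k.

Section Covered.

Hypothesis covered : forall r, 0 < r ->
  exists Z, eventually (fun n => near_list Z r (p n) /\ near_list Z r (q n)).

Lemma covered_refine (P : nat -> Prop) k : frequently P ->
  exists c, frequently (fun n => P n /\ pair_ball c k n).
Proof.
  intros HP; destruct (covered (inv_succ k) (inv_succ_pos k)) as [Z [N0 HN0]].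
  destruct (frequently_pigeonhole (list_prod Z Z) (fun n => P n /\ (N0 <= n)%nat)
              (fun c => pair_ball c k)) as [c [_ Hc]].
  - intros m; destruct (HP (m + N0)%nat) as [n [Hn Pn]].
    exists n; split; [lia|split; [exact Pn|lia]].
  - intros n [_ Hn]; destruct (HN0 n Hn) as [[z1 [H1 D1]] [z2 [H2 D2]]].
    exists (z1, z2); split; [now apply in_prod|split; assumption].
  - exists c; intros m; destruct (Hc m) as [n [Hn [[Pn _] Hb]]]; eauto.
Qed.

Lemma covered_accumulation : exists P Q : N, forall eps, 0 < eps -> forall n0,
  exists n, (n0 <= n)%nat /\ d (p n) P < eps /\ d (q n) Q < eps.
Proof.
  destruct (frequently_nested (N * N) (p 0%nat, p 0%nat) pair_ball covered_refine) as [c Hc].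
  assert (Hcenters : forall j k, d (fst (c j)) (fst (c k)) < inv_succ j + inv_succ k /\
                                 d (snd (c j)) (snd (c k)) < inv_succ j + inv_succ k).
  { intros j k; destruct (Hc (Nat.max j k) 0%nat) as [n [_ Hn]].
    destruct (Hn j (Nat.le_max_l j k)) as [H1 H2]; destruct (Hn k (Nat.le_max_r j k)) as [H3 H4].
    pose proof (dist_triangle d hd (fst (c j)) (p n) (fst (c k))) as T1.
    pose proof (dist_triangle d hd (snd (c j)) (q n) (snd (c k))) as T2.
    rewrite (dist_sym d hd (fst (c j)) (p n)) in T1.
    rewrite (dist_sym d hd (snd (c j)) (q n)) in T2.
    split; lra. }
  destruct (complete_limit_of_inv_succ_Cauchy (fun k => fst (c k))) as [P HP];
    [intros; apply Hcenters|].
  destruct (complete_limit_of_inv_succ_Cauchy (fun k => snd (c k))) as [Q HQ];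
    [intros; apply Hcenters|].
  exists P, Q; intros eps Heps n0.
  destruct (HP (eps / 2) ltac:(lra)) as [K1 HK1]; destruct (HQ (eps / 2) ltac:(lra)) as [K2 HK2].
  destruct (inv_succ_small (eps / 2)) as [K3 HK3]; [lra|].
  set (k := (K1 + K2 + K3)%nat).
  destruct (Hc k n0) as [n [Hn Hball]]; exists n; split; [exact Hn|].
  destruct (Hball k (le_n k)) as [B1 B2].
  specialize (HK1 k ltac:(unfold k; lia)); specialize (HK2 k ltac:(unfold k; lia)).
  pose proof (inv_succ_antitone K3 k ltac:(unfold k; lia)).
  pose proof (dist_triangle d hd (p n) (fst (c k)) P).
  pose proof (dist_triangle d hd (q n) (snd (c k)) Q).
  simpl in HK1, HK2; split; lra.
Qed.

End Covered.

Lemma frequently_far_of_not_covered :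
  ~ (forall r, 0 < r ->
     exists Z, eventually (fun n => near_list Z r (p n) /\ near_list Z r (q n))) ->
  exists r, 0 < r /\ forall Z : list N,
    frequently (fun n => ~ near_list Z r (p n) \/ ~ near_list Z r (q n)).
Proof.
  intros Hnot; apply not_all_ex_not in Hnot; destruct Hnot as [r Hr].
  apply imply_to_and in Hr; destruct Hr as [Hr HZ]; exists r; split; [exact Hr|].
  intros Z n0; apply NNPP; intros Hnf; apply HZ; exists Z, n0; intros n Hn.
  apply NNPP; intros Hn'; apply Hnf; exists n; split; [exact Hn|now apply not_and_or].
Qed.

End CoveredSequences.

Lemma not_near_list {N : Type} (d : N -> N -> R) (Z : list N) (r : R) (a : N) :
  ~ near_list d Z r a -> forall z, In z Z -> r <= d a z.
Proof. intros Hfar z Hz; apply Rnot_lt_le; intros Hlt; apply Hfar; now exists z. Qed.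

Lemma frequently_chain {A : Type} (Z0 : list A) (pts : nat -> list A)
  (P : list A -> nat -> Prop) (n1 : nat) :
  (forall Z, frequently (P Z)) ->
  exists (nk : nat -> nat) (Zk : nat -> list A),
    Zk 0%nat = Z0 /\ (forall k, Zk (S k) = pts (nk k) ++ Zk k) /\
    (forall k, (n1 + k <= nk k)%nat) /\ (forall k, P (Zk k) (nk k)).
Proof.
  intros Hfreq.
  set (next := fun Z m => epsilon (inhabits 0%nat) (fun n => (m <= n)%nat /\ P Z n)).
  assert (Hnext : forall Z m, (m <= next Z m)%nat /\ P Z (next Z m))
    by (intros Z m; apply epsilon_spec, Hfreq).
  (* [state k] is the list [Zk k] together with a lower bound for [nk k]. *)
  set (state := fix state (k : nat) : list A * nat :=
    match k with
    | O => (Z0, n1)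
    | S k' => let n := next (fst (state k')) (snd (state k')) in
              (pts n ++ fst (state k'), S n)
    end).
  exists (fun k => next (fst (state k)) (snd (state k))), (fun k => fst (state k)).
  split; [reflexivity|split; [reflexivity|split]].
  - assert (Hbound : forall k, (n1 + k <= snd (state k))%nat).
    { induction k as [|k IH]; simpl; [lia|].
      pose proof (proj1 (Hnext (fst (state k)) (snd (state k)))); lia. }
    intros k; pose proof (Hbound k).
    pose proof (proj1 (Hnext (fst (state k)) (snd (state k)))); lia.
  - intros k; apply Hnext.
Qed.

Section WeaklyConvergentMolecules.

Context (cplx : bool) {N : Type} (dN : N -> N -> R) (zN : N).
Hypothesis hN : is_metric dN.
Variables (gamma : (N -> C) -> C) (p q : nat -> N) (dn : nat -> R).
Hypothesis hgamma : in_free cplx dN zN gamma.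
Hypothesis dn_pos : forall n, 0 < dn n.
Hypothesis mol_cvg : forall g, Lip0 cplx dN zN g ->
  is_lim_seq (fun n => Cmod (Cminus (Cmult (RtoC (/ dn n)) (Cminus (g (p n)) (g (q n))))
                                    (gamma g))) 0.

Definition mol (G : N -> R) (n : nat) : R := / dn n * (G (p n) - G (q n)).

Lemma mol_cvg_real (G : N -> R) (L : R) :
  G zN = 0 -> (forall a b, Rabs (G a - G b) <= L * dN a b) ->
  is_lim_seq (fun n => Cmod (Cminus (RtoC (mol G n)) (gamma (fun w => RtoC (G w))))) 0.
Proof.
  intros HG0 HG; eapply is_lim_seq_ext; [|apply (mol_cvg _ (Lip0_RtoC cplx dN zN G L HG0 HG))].
  intros n; simpl; now rewrite Cmult_RtoC_minus.
Qed.

Lemma gamma_eq_of_frequently_mol_eq (G H : N -> R) :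
  real_lip1 dN zN G -> real_lip1 dN zN H -> frequently (fun n => mol G n = mol H n) ->
  gamma (fun w => RtoC (G w)) = gamma (fun w => RtoC (H w)).
Proof.
  intros [HG0 HG] [HH0 HH] Hfreq.
  apply (lim_eq_of_frequently_eq (fun n => RtoC (mol G n)) (fun n => RtoC (mol H n)));
    [apply (mol_cvg_real G 1)|apply (mol_cvg_real H 1)|];
    try (intros a b; rewrite Rmult_1_l); auto.
  intros n0; destruct (Hfreq n0) as [n [Hn E]]; exists n; now rewrite E.
Qed.

Lemma in_free_local_eq0 (G : N -> R) (eps : R) (pts : list N) :
  real_lip1 dN zN G ->
  (forall g h, Lip0 cplx dN zN g -> lip_le1 dN g -> Lip0 cplx dN zN h -> lip_le1 dN h ->
    (forall a, In a pts -> g a = h a) -> Cmod (Cminus (gamma g) (gamma h)) <= 2 * eps) ->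
  (forall a, In a pts -> G a = 0) -> Cmod (gamma (fun w => RtoC (G w))) <= 2 * eps.
Proof.
  intros HG Hloc Hpts.
  assert (H0 : real_lip1 dN zN (fun _ => 0)).
  { split; [reflexivity|intros; rewrite Rminus_diag, Rabs_R0; apply (dist_nonneg dN hN)]. }
  specialize (Hloc _ _ (Lip0_of_real_lip1 cplx dN zN G HG) (lip_le1_of_real_lip1 dN zN G HG)
                (Lip0_of_real_lip1 cplx dN zN _ H0) (lip_le1_of_real_lip1 dN zN _ H0)).
  cbv beta in Hloc; rewrite (in_free_zero_fun cplx dN zN gamma hgamma) in Hloc.
  replace (gamma (fun w => RtoC (G w))) with (Cminus (gamma (fun w => RtoC (G w))) (RtoC 0))
    by (unfold Cminus; ring).
  apply Hloc; intros a Ha; now rewrite Hpts.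
Qed.

Lemma gamma_real_zero_of_dist_lim0 :
  is_lim_seq (fun n => dN (p n) (q n)) 0 ->
  forall G, real_lip1 dN zN G -> gamma (fun w => RtoC (G w)) = RtoC 0.
Proof.
  intros Hpq G [HG0 HG]; apply Cminus_eq_of_Cmod_small; intros eps Heps.
  destruct (in_free_almost_local cplx dN zN gamma hgamma (eps / 2) ltac:(lra)) as [pts Hloc].
  destruct (contraction_matching_frequently (0 :: map G pts) (fun n => G (p n)) (fun n => G (q n)))
    as [phi [Hphi [Hkill Hfreq]]].
  { apply is_lim_seq_abs_0, (is_lim_seq_le_le _ _ _ 0 (fun n => conj (Rabs_pos _) (HG _ _)));
      [apply is_lim_seq_const|exact Hpq]. }
  assert (Hphi0 : phi 0 = 0) by (apply Hkill; now left).
  assert (HphiG : real_lip1 dN zN (fun w => phi (G w))).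
  { split; [now rewrite HG0|intros a b; eapply Rle_trans; [apply Hphi|apply HG]]. }
  rewrite <- (gamma_eq_of_frequently_mol_eq _ _ HphiG (conj HG0 HG)).
  - replace (Cminus _ (RtoC 0)) with (gamma (fun w => RtoC (phi (G w)))) by (unfold Cminus; ring).
    replace eps with (2 * (eps / 2)) by field.
    apply (in_free_local_eq0 _ _ pts HphiG Hloc).
    intros a Ha; apply Hkill; right; now apply in_map.
  - intros n0; destruct (Hfreq n0) as [n [Hn E]]; exists n; split; [exact Hn|].
    unfold mol; now rewrite E.
Qed.

Lemma gamma_real_zero_of_dn_unbounded :
  (forall B, frequently (fun n => B < dn n)) ->
  forall G, real_lip1 dN zN G -> gamma (fun w => RtoC (G w)) = RtoC 0.
Proof.
  intros Hunb G [HG0 HG]; apply Cminus_eq_of_Cmod_small; intros eps Heps.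
  destruct (in_free_almost_local cplx dN zN gamma hgamma (eps / 2) ltac:(lra)) as [pts Hloc].
  destruct (list_Rabs_bound (map G pts)) as [c [Hc Hpts]].
  set (H := fun w => clamp c (G w)).
  assert (HH : real_lip1 dN zN H).
  { split; [unfold H; rewrite HG0; apply clamp_id; rewrite Rabs_R0; exact Hc|].
    intros a b; eapply Rle_trans; [apply clamp_lip, Hc|apply HG]. }
  assert (Hgamma_H : gamma (fun w => RtoC (H w)) = RtoC 0).
  { (* the molecules of the bounded function H are at most 2c / dn n *)
    apply (lim_zero_of_frequently_small _ _ (mol_cvg_real H 1 (proj1 HH)
             (fun a b => eq_ind_r _ (proj2 HH a b) (Rmult_1_l _)))).
    intros eta Heta n0; destruct (Hunb (2 * c / eta) n0) as [n [Hn Hbig]].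
    exists n; split; [exact Hn|]; rewrite Cmod_R; unfold mol.
    pose proof (dn_pos n).
    assert (Hdiff : Rabs (H (p n) - H (q n)) <= 2 * c).
    { pose proof (clamp_bound c (G (p n)) Hc); pose proof (clamp_bound c (G (q n)) Hc).
      eapply Rle_trans; [apply Rabs_triang|rewrite Rabs_Ropp; unfold H; lra]. }
    assert (Hlt : 2 * c < eta * dn n).
    { apply (Rmult_lt_compat_l eta) in Hbig; [|lra].
      replace (eta * (2 * c / eta)) with (2 * c) in Hbig by (field; lra); exact Hbig. }
    rewrite Rabs_mult, Rabs_inv, (Rabs_pos_eq (dn n)) by lra.
    apply (Rmult_lt_reg_l (dn n)); [lra|].
    rewrite <- Rmult_assoc, Rinv_r, Rmult_1_l by lra; nra. }
  replace (Cminus _ (RtoC 0))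
    with (Cminus (gamma (fun w => RtoC (G w))) (gamma (fun w => RtoC (H w))))
    by (rewrite Hgamma_H; reflexivity).
  replace eps with (2 * (eps / 2)) by field.
  pose proof (conj HG0 HG : real_lip1 dN zN G) as HGl.
  apply Hloc.
  - exact (Lip0_of_real_lip1 cplx dN zN G HGl).
  - exact (lip_le1_of_real_lip1 dN zN G HGl).
  - exact (Lip0_of_real_lip1 cplx dN zN H HH).
  - exact (lip_le1_of_real_lip1 dN zN H HH).
  - intros a Ha; unfold H; rewrite clamp_id; [reflexivity|apply Hpts, in_map, Ha].
Qed.

Lemma dist_eventually_ge_of_nonzero (alpha : R) :
  0 < alpha -> (forall n, alpha <= dn n) -> ~ free_zero cplx dN zN gamma ->
  exists beta n1, 0 < beta /\ forall n, (n1 <= n)%nat -> beta <= dN (p n) (q n).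
Proof.
  intros Halpha Hdn Hnz.
  assert (Hg : exists g, Lip0 cplx dN zN g /\ gamma g <> RtoC 0).
  { apply NNPP; intros Hnone; apply Hnz; intros g Hg; apply NNPP; eauto. }
  destruct Hg as [g [Hg Hgamma_g]].
  assert (Hc : 0 < Cmod (gamma g)).
  { destruct (Rle_lt_or_eq_dec _ _ (Cmod_ge_0 (gamma g))) as [|Hz]; [assumption|].
    now apply eq_sym, Cmod_eq_0 in Hz. }
  pose proof Hg as [_ [[L HL] _]]; set (L' := Rabs L + 1).
  assert (HL' : 0 < L') by (unfold L'; pose proof (Rabs_pos L); lra).
  destruct (is_lim_seq_Cmod_eventually _ _ (mol_cvg g Hg) (Cmod (gamma g) / 2)) as [n1 Hn1]; [lra|].
  (* |gamma g| / 2 <= |molecule at g| <= L' d(p n, q n) / alpha *)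
  exists (Cmod (gamma g) * alpha / (2 * L')), n1; split; [apply Rdiv_lt_0_compat; nra|].
  intros n Hn; specialize (Hn1 n Hn); specialize (Hdn n); pose proof (dn_pos n).
  set (m := Cmult (RtoC (/ dn n)) (Cminus (g (p n)) (g (q n)))) in *.
  pose proof (Cmod_minus_triangle (gamma g) m (RtoC 0)) as T.
  replace (Cminus m (RtoC 0)) with m in T by (unfold Cminus; ring).
  replace (Cminus (gamma g) (RtoC 0)) with (gamma g) in T by (unfold Cminus; ring).
  rewrite Cmod_minus_sym in T.
  assert (Hm : Cmod m * dn n <= L' * dN (p n) (q n)).
  { unfold m; rewrite Cmod_mult, Cmod_R, Rabs_pos_eq by (apply Rlt_le, Rinv_0_lt_compat; lra).
    replace (/ dn n * Cmod (Cminus (g (p n)) (g (q n))) * dn n)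
      with (Cmod (Cminus (g (p n)) (g (q n)))) by (field; lra).
    eapply Rle_trans; [apply HL|apply Rmult_le_compat_r; [apply (dist_nonneg dN hN)|]].
    unfold L'; pose proof (Rle_abs L); lra. }
  apply (Rmult_le_reg_l (2 * L')); [lra|].
  replace (2 * L' * (Cmod (gamma g) * alpha / (2 * L'))) with (Cmod (gamma g) * alpha)
    by (field; lra).
  assert (Cmod (gamma g) / 2 <= Cmod m) by lra.
  nra.
Qed.

Lemma far_molecules_contradiction (B beta r : R) (n1 : nat) :
  (forall n, dn n <= B) -> 0 < beta -> 0 < r ->
  (forall n, (n1 <= n)%nat -> beta <= dN (p n) (q n)) ->
  (forall Z, frequently (fun n => ~ near_list dN Z r (p n) \/ ~ near_list dN Z r (q n))) ->
  False.
Proof.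
  intros Hdn Hbeta Hr Hpq Hfar.
  destruct (frequently_chain (zN :: nil) (fun n => p n :: q n :: nil) _ n1 Hfar)
    as [nk [Zk [HZ0 [HZS [Hnk HPk]]]]].
  assert (HZmono : forall j k z, (j <= k)%nat -> In z (Zk j) -> In z (Zk k)).
  { intros j k z Hjk Hz; induction Hjk as [|m _ IH]; [exact Hz|].
    rewrite HZS; apply in_or_app; auto. }
  set (side := fun k => if excluded_middle_informative (~ near_list dN (Zk k) r (p (nk k)))
                        then true else false).
  set (w := fun k => if side k then p (nk k) else q (nk k)).
  set (v := fun k => if side k then q (nk k) else p (nk k)).
  assert (Hw : forall k z, In z (Zk k) -> r <= dN (w k) z).
  { intros k; unfold w, side; destruct excluded_middle_informative as [Hp|Hp];
      apply not_near_list; [exact Hp|destruct (HPk k); [contradiction|assumption]]. }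
  destruct (exists_lip_not_Cauchy_oriented_mol dN hN zN w v side (fun k => dn (nk k)) r beta B)
    as [G [HG0 [HG HnC]]]; auto.
  - intros j k Hjk; split; apply Hw, (HZmono (S j)); try lia;
      rewrite HZS; unfold w, v; destruct (side j); simpl; auto.
  - intros k; apply Hw, (HZmono 0%nat); [lia|rewrite HZ0; now left].
  - intros k; unfold w, v; specialize (Hpq (nk k) ltac:(specialize (Hnk k); lia)).
    destruct (side k); [exact Hpq|now rewrite (dist_sym dN hN)].
  - apply HnC.
    replace (oriented_mol w v side (fun k => dn (nk k)) G) with (fun k => mol G (nk k)).
    + apply (Cauchy_crit_subseq (mol G) _ nk (mol_cvg_real G 2 HG0 HG)).
      intros k; specialize (Hnk k); lia.
    + apply functional_extensionality; intros k.
      unfold oriented_mol, mol, w, v; destruct (side k); ring.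
Qed.

End WeaklyConvergentMolecules.

Lemma lipschitz_map_dist_lim0 {M N : Type} (dM : M -> M -> R) (dN : N -> N -> R) (f : M -> N)
  (x y : nat -> M) :
  is_metric dN -> lipschitz_map dM dN f -> is_lim_seq (fun n => dM (x n) (y n)) 0 ->
  is_lim_seq (fun n => dN (f (x n)) (f (y n))) 0.
Proof.
  intros hN [L HL] Hlim.
  apply (is_lim_seq_le_le (fun _ => 0) _ (fun n => L * dM (x n) (y n)));
    [intros n; split; [apply (dist_nonneg dN hN)|apply HL]|apply is_lim_seq_const|].
  replace (Finite 0) with (Rbar_mult L 0) by (simpl; now rewrite Rmult_0_r).
  now apply is_lim_seq_scal_l.
Qed.

Lemma frequently_gt_of_lim_p_infty (u : nat -> R) :
  is_lim_seq u p_infty -> forall B, frequently (fun n => B < u n).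
Proof.
  intros Hlim B n0; apply is_lim_seq_spec in Hlim; destruct (Hlim B) as [N0 HN0].
  exists (n0 + N0)%nat; split; [lia|apply HN0; lia].
Qed.

Theorem lemma2p3 (cplx : bool)
  (M : Type) (dM : M -> M -> R) (zM : M)
  (N : Type) (dN : N -> N -> R) (zN : N)
  (hM : is_metric dM) (hcM : complete_metric dM)
  (hN : is_metric dN) (hcN : complete_metric dN)
  (f : M -> N) (hf : lipschitz_map dM dN f) (hf0 : f zM = zN)
  (x y : nat -> M) (hxy : forall n, x n <> y n)
  (gamma : (N -> C) -> C) (hgamma : in_free cplx dN zN gamma)
  (hcvg : weak_cvg cplx dN zN (fun n => molecule dM f (x n) (y n)) gamma) :
  (is_lim_seq (fun n => dM (x n) (y n)) 0 -> free_zero cplx dN zN gamma) /\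
  (is_lim_seq (fun n => dM (x n) (y n)) p_infty -> free_zero cplx dN zN gamma) /\
  ((exists alpha, 0 < alpha /\ forall n, alpha <= dM (x n) (y n)) ->
   ~ free_zero cplx dN zN gamma ->
   (exists B, forall n, dM (x n) (y n) <= B) /\
   (exists p q : N, forall eps, 0 < eps -> forall n0, exists n, (n0 <= n)%nat /\
      dN (f (x n)) p < eps /\ dN (f (y n)) q < eps)).
Proof.
  set (dn := fun n => dM (x n) (y n)).
  assert (dn_pos : forall n, 0 < dn n) by (intros n; apply (dist_pos dM hM), hxy).
  pose proof (free_zero_of_real_lip1 cplx dN zN gamma hgamma (dist_nonneg dN hN)) as Hreal.
  assert (Hunb : (forall B, frequently (fun n => B < dn n)) -> free_zero cplx dN zN gamma)
    by (intros HB; apply Hreal, (gamma_real_zero_of_dn_unbounded cplx dN zN gamma _ _ dn hgamma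
                                  dn_pos hcvg HB)).
  split; [|split].
  - intros Hlim; apply Hreal, (gamma_real_zero_of_dist_lim0 cplx dN zN hN gamma _ _ dn hgamma hcvg).
    now apply (lipschitz_map_dist_lim0 dM).
  - intros Hlim; apply Hunb, frequently_gt_of_lim_p_infty, Hlim.
  - intros [alpha [Halpha Hdn]] Hnz.
    assert (Hbdd : exists B, forall n, dn n <= B)
      by (apply NNPP; intros Hnot; now apply Hnz, Hunb, frequently_gt_of_unbounded).
    split; [exact Hbdd|destruct Hbdd as [B HB]].
    destruct (classic (forall r, 0 < r -> exists Z, eventually (fun n =>
      near_list dN Z r (f (x n)) /\ near_list dN Z r (f (y n))))) as [Hcov|Hcov].
    + exact (covered_accumulation dN hN hcN _ _ Hcov).
    + destruct (frequently_far_of_not_covered dN _ _ Hcov) as [r [Hr Hfar]].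
      destruct (dist_eventually_ge_of_nonzero cplx dN zN hN gamma _ _ dn dn_pos hcvg alpha)
        as [beta [n1 [Hbeta Hpq]]]; auto.
      exact (False_ind _ (far_molecules_contradiction cplx dN zN hN gamma _ _ dn dn_pos hcvg
                            B beta r n1 HB Hbeta Hr Hpq Hfar)).
Qed.
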